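(* Let $M$, $M'$ be matroids on ground sets $E$, $E'$ with $E\cap E'=\{p\}$. (a) If $p$ is a coloop of neither $M$ nor $M'$, and every two bases of $M$ intersect or every two bases of $M'$ intersect, then every two bases of $\operatorname{Ser}(M,M')$ intersect. (b) If $p$ is a loop of neither $M$ nor $M'$, and every two bases of $M$ intersect in at least two elements or every two bases of $M'$ intersect in at least two elements, then every two bases of $\operatorname{Par}(M,M')$ intersect.
   Context: The series connection $\operatorname{Ser}(M,M')$ is the matroid on $E\cup E'$ whose bases are the sets $B\cup B'$ with $B$ a basis of $M$, $B'$ a basis of $M'$, $B\cap B'=\varnothing$. The parallel connection $\operatorname{Par}(M,M')$ is the matroid on $E\cup E'$ whose bases are the sets $B\cup B'$ with $B,B'$ bases of $M,M'$ and $B\cap B'=\{p\}$, together with the sets $(B\cup B')\setminus\{p\}$ with $B,B'$ bases of $M,M'$ and $p\in(B\setminus B')\cup(B'\setminus B)$. *)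

From mathcomp Require Import all_boot.
Set Implicit Arguments. Unset Strict Implicit. Unset Printing Implicit Defensive.

Definition is_matroid_bases (T : finType) (E : {set T}) (BM : {set {set T}}) : Prop :=
  [/\ BM != set0,
      (forall B, B \in BM -> B \subset E) &
      (forall B1 B2, B1 \in BM -> B2 \in BM -> forall x, x \in B1 :\: B2 ->
         exists2 y, y \in B2 :\: B1 & (B1 :\ x) :|: [set y] \in BM)].

Definition is_coloop (T : finType) (E : {set T}) (BM : {set {set T}}) (p : T) : Prop :=
  p \in E /\ forall B, B \in BM -> p \in B.

Definition is_loop (T : finType) (E : {set T}) (BM : {set {set T}}) (p : T) : Prop :=
  p \in E /\ forall B, B \in BM -> p \notin B.

Definition bases_meet_atleast (T : finType) (k : nat) (BM : {set {set T}}) : Prop :=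
  forall B1 B2, B1 \in BM -> B2 \in BM -> k <= #|B1 :&: B2|.

Definition ser_bases (T : finType) (BM BM' : {set {set T}}) : {set {set T}} :=
  [set B :|: B' | B in BM, B' in BM' & B :&: B' == set0].

Definition par_bases (T : finType) (p : T) (BM BM' : {set {set T}}) : {set {set T}} :=
  [set B :|: B' | B in BM, B' in BM' & B :&: B' == [set p]]
  :|: [set (B :|: B') :\ p | B in BM, B' in BM'
          & p \in (B :\: B') :|: (B' :\: B)].

From mathcomp Require Import all_boot.

Set Implicit Arguments.
Unset Strict Implicit.
Unset Printing Implicit Defensive.

(* Every basis of Ser(M,M') contains a basis of M and one of M', and every
   basis of Par(M,M') contains B - p and B' - p for bases B of M, B' of M'. *)

Section BasesMeet.

Variable T : finType.

Lemma bases_meet_atleast_covered k (F G : {set {set T}}) :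
  (forall X, X \in F -> exists2 B, B \in G & B \subset X) ->
  bases_meet_atleast k G -> bases_meet_atleast k F.
Proof.
move=> cover meetG X1 X2 /cover [B1 GB1 sB1X1] /cover [B2 GB2 sB2X2].
exact: leq_trans (meetG _ _ GB1 GB2) (subset_leq_card (setISS sB1X1 sB2X2)).
Qed.

Lemma bases_meet_atleast_setD1 k (p : T) (G : {set {set T}}) :
  bases_meet_atleast k.+1 G -> bases_meet_atleast k [set B :\ p | B in G].
Proof.
move=> meetG _ _ /imsetP [B1 GB1 ->] /imsetP [B2 GB2 ->].
have sub : (B1 :&: B2) :\ p \subset (B1 :\ p) :&: (B2 :\ p).
  by apply/subsetP => x; rewrite !inE => /and3P [-> -> ->].
rewrite -ltnS; apply: leq_trans (meetG _ _ GB1 GB2) _.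
rewrite (cardsD1 p (B1 :&: B2)) -addn1 addnC leq_add ?leq_b1 //.
exact: subset_leq_card.
Qed.

Variables BM BM' : {set {set T}}.

Lemma ser_bases_cover X : X \in ser_bases BM BM' ->
  (exists2 B, B \in BM & B \subset X) /\ (exists2 B', B' \in BM' & B' \subset X).
Proof.
case/imset2P => B B' BMB; rewrite inE => /andP [BMB' _] ->.
by split; [exists B; rewrite ?subsetUl | exists B'; rewrite ?subsetUr].
Qed.

Lemma par_bases_cover p X : X \in par_bases p BM BM' ->
  (exists2 B, B \in [set B :\ p | B in BM] & B \subset X) /\
  (exists2 B', B' \in [set B' :\ p | B' in BM'] & B' \subset X).
Proof.
rewrite inE => /orP [] /imset2P [B B' BMB]; rewrite inE => /andP [BMB' _] ->;
  split; [exists (B :\ p) | exists (B' :\ p) | exists (B :\ p) | exists (B' :\ p)];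
  by [ apply: imset_f
     | apply: setSD; rewrite ?subsetUl ?subsetUr
     | apply: subset_trans (subD1set _ p) _; rewrite ?subsetUl ?subsetUr ].
Qed.

End BasesMeet.

Theorem lemma6p2 (T : finType) (E E' : {set T}) (p : T)
    (BM BM' : {set {set T}}) :
  E :&: E' = [set p] ->
  is_matroid_bases E BM -> is_matroid_bases E' BM' ->
  (~ is_coloop E BM p -> ~ is_coloop E' BM' p ->
     bases_meet_atleast 1 BM \/ bases_meet_atleast 1 BM' ->
     bases_meet_atleast 1 (ser_bases BM BM'))
  /\
  (~ is_loop E BM p -> ~ is_loop E' BM' p ->
     bases_meet_atleast 2 BM \/ bases_meet_atleast 2 BM' ->
     bases_meet_atleast 1 (par_bases p BM BM')).
Proof.
move=> _ _ _; split=> _ _ [meet | meet].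
- by apply: (bases_meet_atleast_covered _ meet) => X /ser_bases_cover [].
- by apply: (bases_meet_atleast_covered _ meet) => X /ser_bases_cover [].
- apply: (bases_meet_atleast_covered _ (bases_meet_atleast_setD1 (p := p) meet)).
  by move=> X /par_bases_cover [].
- apply: (bases_meet_atleast_covered _ (bases_meet_atleast_setD1 (p := p) meet)).
  by move=> X /par_bases_cover [].
Qed.
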